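(* Let $n$ be a positive integer and let $\mathcal{B}$ be a balanced bipartite graph on $2n$ vertices with parts $V_1$ and $V_2$ such that $\delta(\mathcal{B})\geq\frac{n}{2}+1$. If $S\subseteq V(\mathcal{B})$ satisfies $|S|=n+1$ and $\mathcal{B}[S]$ is a forest, then $\min\{|S\cap V_1|,|S\cap V_2|\}\in\{1,2,\frac{n}{2}\}$.
   Context: All graphs are finite and simple. A balanced bipartite graph on $2n$ vertices is a bipartite graph with a given bipartition $(V_1,V_2)$ where $|V_1|=|V_2|=n$. $\delta(G)$ denotes the minimum degree of $G$, and $G[S]$ the subgraph induced by $S\subseteq V(G)$. *)

From mathcomp Require Import all_boot.
Set Implicit Arguments. Unset Strict Implicit. Unset Printing Implicit Defensive.

Definition simple_graph (T : finType) (e : rel T) : Prop :=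
  symmetric e /\ irreflexive e.

Definition deg (T : finType) (e : rel T) (v : T) : nat := #|[set u | e v u]|.

Definition balanced_bipartite (T : finType) (e : rel T) (n : nat)
    (V1 V2 : {set T}) : Prop :=
  [/\ V1 :&: V2 = set0, V1 :|: V2 = [set: T], #|V1| = n, #|V2| = n &
      forall u v, e u v ->
        ((u \in V1) && (v \in V2)) || ((u \in V2) && (v \in V1))].

Definition induced_forest (T : finType) (e : rel T) (S : {set T}) : Prop :=
  forall c : seq T, uniq c -> {subset c <= S} -> 3 <= size c -> ~~ cycle e c.

From mathcomp Require Import all_boot zify.
Set Implicit Arguments. Unset Strict Implicit. Unset Printing Implicit Defensive.

(* Let a = |S ∩ V1| <= b = |S ∩ V2|, so a + b = n + 1.  A vertex of S ∩ V1
   misses at most n - b of its neighbours when restricted to S, hence has at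
   least c = ⌈(n+2)/2⌉ - (n - b) neighbours in S; as B[S] is a bipartite
   forest on n + 1 vertices, it has at most n edges, so a * c <= n.  For
   3 <= a < n/2 this contradicts (a - 2)(n - 2a) >= 1, and for a = (n+1)/2 it
   contradicts c >= 2. *)

Section InducedForest.
Variables (T : finType) (e : rel T).
Hypotheses (e_sym : symmetric e) (e_irr : irreflexive e).

Definition deg_in (S : {set T}) (v : T) : nat := #|[set u in S | e v u]|.

Lemma path_chord_cycle x r y :
  uniq (x :: r) -> path e x r -> y \in r -> y != head x r -> e x y ->
  exists c : seq T, [/\ uniq c, {subset c <= x :: r}, 3 <= size c & cycle e c].
Proof.
move=> + + yr; case/splitPr: yr => r1 r2 Hu Hp yz exy.
exists (x :: rcons r1 y); split.
- move: Hu; rewrite -cats1 /= !mem_cat !cat_uniq /= !inE !negb_or.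
  by case/andP=> /and3P[-> -> _] /and3P[-> /andP[-> _] _].
- move=> w; rewrite inE mem_rcons inE => H; rewrite inE mem_cat inE.
  by case/orP: H => [->|/orP[->|->]]; rewrite ?orbT.
- by case: r1 yz {Hu Hp} => [|w r1]; rewrite /= ?eqxx ?size_rcons.
- rewrite /= rcons_path last_rcons e_sym exy andbT rcons_path.
  by move: Hp; rewrite cat_path /= => /and3P[-> ->].
Qed.

Section MinDegreeTwo.
Variable S : {set T}.
Hypotheses (S_forest : induced_forest e S)
           (S_deg2 : forall x, x \in S -> 1 < deg_in S x).

(* The end x of a path has a second neighbour in S besides its successor;
   it cannot lie on the path, for that would close a cycle. *)
Lemma forest_path_extend x r :
  uniq (x :: r) -> {subset x :: r <= S} -> path e x r ->
  exists y, [/\ y \in S, y \notin x :: r & e y x].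
Proof.
move=> Hu Hs Hp; have xS : x \in S by apply: Hs; rewrite inE eqxx.
have : 0 < #|[set u in S | e x u] :\ head x r|.
  have := S_deg2 xS; rewrite /deg_in (cardsD1 (head x r)).
  by case: (_ \in _) => /=; lia.
case/card_gt0P => y; rewrite !inE => /andP[yz /andP[yS exy]].
exists y; split=> //; last by rewrite e_sym.
apply/negP; rewrite inE.
case/orP=> [/eqP yx|yr]; first by move: exy; rewrite yx e_irr.
have [c [cu cs c3 cc]] := path_chord_cycle Hu Hp yr yz exy.
by move: (S_forest cu (fun w wc => Hs w (cs w wc)) c3); rewrite cc.
Qed.

Lemma forest_long_path k : S != set0 ->
  exists x r, [/\ uniq (x :: r), {subset x :: r <= S}, path e x r & size r = k].
Proof.
case/set0Pn=> x0 x0S; elim: k => [|k [x [r [Hu Hs Hp <-]]]].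
  by exists x0, [::]; split=> // y; rewrite inE => /eqP->.
have [y [yS yr eyx]] := forest_path_extend Hu Hs Hp.
exists y, (x :: r); split=> //=; first by rewrite yr.
- by move=> w; rewrite inE => /predU1P[->|/Hs].
- by rewrite eyx.
Qed.

Lemma forest_min_deg2_empty : S = set0.
Proof.
apply/eqP; apply/negPn/negP => /(forest_long_path #|S|) [x [r [Hu Hs _ Hr]]].
have : {subset x :: r <= enum S} by move=> w /Hs; rewrite mem_enum.
by move/(uniq_leq_size Hu); rewrite -cardE /= Hr ltnn.
Qed.

End MinDegreeTwo.

Lemma forest_has_leaf (S : {set T}) : S != set0 -> induced_forest e S ->
  exists2 v, v \in S & deg_in S v <= 1.
Proof.
move=> S0 HF; have [v /andP[vS dv]|Hdeg] := pickP [pred v in S | deg_in S v <= 1].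
  by exists v.
case/eqP: S0; apply: forest_min_deg2_empty HF _ => x xS.
by have := Hdeg x; rewrite /= xS ltnNge => /negbT.
Qed.

Lemma induced_forest_subset (S S' : {set T}) : S' \subset S ->
  induced_forest e S -> induced_forest e S'.
Proof. by move=> /subsetP sS HF c u sc; apply: HF => // w /sc /sS. Qed.

Lemma deg_in_setD1 (S : {set T}) v u :
  deg_in S u = deg_in (S :\ v) u + (e u v && (v \in S)).
Proof.
rewrite /deg_in (cardsD1 v [set w in S | e u w]) inE andbC addnC.
by congr (_ + _); apply: eq_card => w; rewrite !inE; case: (w == v).
Qed.

Lemma sum_edges_to (S : {set T}) v : \sum_(u in S) (e u v : nat) = deg_in S v.
Proof.
rewrite /deg_in -sum1_card big_mkcond [RHS]big_mkcond /=.
by apply: eq_bigr => u _; rewrite inE e_sym; case: (u \in S).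
Qed.

(* Removing a leaf v destroys at most one edge, i.e. the degree sum drops by
   at most 2. *)
Lemma forest_deg_in_sum (S : {set T}) : induced_forest e S ->
  \sum_(v in S) deg_in S v <= 2 * (#|S| - 1).
Proof.
have [k] := ubnP #|S|; elim: k S => // k IH S ltSk HF.
have [->|S0] := eqVneq S set0; first by rewrite big_set0.
have [v vS dv] := forest_has_leaf S0 HF.
have cS : #|S| = #|S :\ v|.+1 by rewrite (cardsD1 v S) vS.
have IHv := IH (S :\ v) ltac:(by rewrite -ltnS -cS)
  (induced_forest_subset (subsetDl S [set v]) HF).
rewrite (big_setD1 v vS) /=.
have -> : \sum_(u in S :\ v) deg_in S u =
          \sum_(u in S :\ v) deg_in (S :\ v) u + deg_in (S :\ v) v.
  rewrite -(sum_edges_to (S :\ v)) -big_split /=.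
  by apply: eq_bigr => u _; rewrite (deg_in_setD1 S v u) vS andbT.
have dvv : deg_in S v = deg_in (S :\ v) v.
  by rewrite (deg_in_setD1 S v v) e_irr addn0.
have dvS : deg_in S v <= #|S :\ v|.
  by rewrite dvv; apply/subset_leq_card/subsetP => u; rewrite inE => /andP[].
lia.
Qed.

End InducedForest.

Lemma deg_le_deg_in_add (T : finType) (e : rel T) (S Y : {set T}) v :
  {subset [set u | e v u] <= Y} -> deg e v <= deg_in e S v + (#|Y| - #|S :&: Y|).
Proof.
move=> HY; rewrite /deg -(cardsID S [set u | e v u]).
have -> : [set u | e v u] :&: S = [set u in S | e v u].
  by apply/setP => u; rewrite !inE andbC.
rewrite leq_add2l -(cardsID S Y) setIC addnC addnK.
apply: subset_leq_card; apply/subsetP => u; rewrite !inE => /andP[-> eu] /=.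
by apply: HY; rewrite inE.
Qed.

Lemma deg_in_nbr_sub (T : finType) (e : rel T) (S Y : {set T}) v :
  {subset [set u | e v u] <= Y} -> deg_in e S v = \sum_(u in S :&: Y) (e v u : nat).
Proof.
move=> HY; rewrite /deg_in -sum1_card big_mkcond [RHS]big_mkcond /=.
apply: eq_bigr => u _; rewrite !inE.
case evu: (e v u); first by rewrite (HY u) ?inE ?evu // !andbT.
by rewrite andbF; case: (_ && _).
Qed.

Section BalancedBipartite.
Variables (T : finType) (e : rel T) (n : nat).

Lemma balanced_bipartite_sym (V1 V2 : {set T}) :
  balanced_bipartite e n V1 V2 -> balanced_bipartite e n V2 V1.
Proof.
case=> dis cov c1 c2 bip; split; rewrite 1?setIC 1?setUC //.
by move=> u v /bip; rewrite orbC.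
Qed.

Lemma bipartite_compl (V1 V2 : {set T}) :
  balanced_bipartite e n V1 V2 -> V2 = ~: V1.
Proof.
case=> dis cov _ _ _; apply/setP => u; rewrite inE.
have /setP/(_ u) := dis; have /setP/(_ u) := cov.
by rewrite !inE; case: (u \in V1); case: (u \in V2).
Qed.

Lemma bipartite_nbr (V1 V2 : {set T}) v : balanced_bipartite e n V1 V2 ->
  v \in V1 -> {subset [set u | e v u] <= V2}.
Proof.
move=> HB v1 u; case: (HB) => _ _ _ _ bip; rewrite inE (bipartite_compl HB) !inE.
by case/bip/orP=> /andP[]; rewrite (bipartite_compl HB) !inE v1 // => _ ->.
Qed.

Lemma bipartite_card_split (V1 V2 S : {set T}) : balanced_bipartite e n V1 V2 ->
  #|S :&: V1| + #|S :&: V2| = #|S|.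
Proof. by move/bipartite_compl->; rewrite -setDE cardsID. Qed.

Lemma bipartite_deg_in_sum (V1 V2 S : {set T}) :
  symmetric e -> balanced_bipartite e n V1 V2 ->
  \sum_(v in S :&: V1) deg_in e S v = \sum_(u in S :&: V2) deg_in e S u.
Proof.
move=> e_sym HB; have nbr2 := bipartite_nbr (balanced_bipartite_sym HB).
rewrite (eq_bigr _ (fun v vS => deg_in_nbr_sub S (bipartite_nbr HB (setIP vS).2))).
rewrite exchange_big; apply: eq_bigr => u /setIP[_ /nbr2 /deg_in_nbr_sub ->].
by apply: eq_bigr => v _; rewrite e_sym.
Qed.

(* In a bipartite graph every edge of S has exactly one end in V1. *)
Lemma bipartite_forest_edges (V1 V2 S : {set T}) :
  symmetric e -> irreflexive e -> balanced_bipartite e n V1 V2 ->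
  induced_forest e S ->
  \sum_(v in S :&: V1) deg_in e S v <= #|S| - 1.
Proof.
move=> e_sym e_irr HB HF; have := forest_deg_in_sum e_sym e_irr HF.
rewrite (big_setID V1) /= setDE -(bipartite_compl HB).
rewrite -(bipartite_deg_in_sum _ e_sym HB); lia.
Qed.

End BalancedBipartite.

Lemma min_part_cases n a b c : a + b = n.+1 -> a <= b -> b <= n ->
  a * c <= n -> n + 2 <= 2 * c + 2 * (n - b) -> a = 1 \/ a = 2 \/ 2 * a = n.
Proof.
move=> ab alb bn ac hc.
case: (ltnP a 3) => a3; first lia.
case: (ltngtP (2 * a) n) => h; last by right; right.
- have : 1 <= (a - 2) * (n - 2 * a) by rewrite muln_gt0; lia.
  have : a * (n + 4 - 2 * a) <= a * (2 * c) by apply: leq_mul; lia.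
  nia.
- have : 2 <= c by lia.
  nia.
Qed.

Theorem theorem2p3 (n : nat) (T : finType) (e : rel T) (V1 V2 : {set T}) :
  0 < n ->
  simple_graph e ->
  balanced_bipartite e n V1 V2 ->
  (* delta(B) >= n/2 + 1, i.e. 2 * deg v >= n + 2 *)
  (forall v : T, n + 2 <= 2 * deg e v) ->
  forall S : {set T}, #|S| = n.+1 -> induced_forest e S ->
  let m := minn #|S :&: V1| #|S :&: V2| in
  m = 1 \/ m = 2 \/ 2 * m = n.
Proof.
move=> _ [e_sym e_irr] HB Hdeg S cS HF /=.
wlog hab : V1 V2 HB / #|S :&: V1| <= #|S :&: V2|.
  move=> W; case/orP: (leq_total #|S :&: V1| #|S :&: V2|) => h; first exact: W HB h.
  by rewrite minnC; apply: W (balanced_bipartite_sym HB) h.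
rewrite (minn_idPl hab); set a := #|S :&: V1|; set b := #|S :&: V2|.
have c2 : #|V2| = n by case: HB.
have ab : a + b = n.+1 by rewrite -cS (bipartite_card_split _ HB).
have bn : b <= n by rewrite -c2 subset_leq_card // subsetIr.
have edges := bipartite_forest_edges e_sym e_irr HB HF.
apply: (min_part_cases (c := (n + 3) %/ 2 - (n - b)) ab hab bn) => //; last lia.
apply: leq_trans (leq_trans _ edges) _; last by rewrite cS subn1.
rewrite /a -sum_nat_const; apply: leq_sum => v /setIP[_ v1].
have := deg_le_deg_in_add S (bipartite_nbr HB v1); have := Hdeg v; lia.
Qed.
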